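(* Let $F$ be a field. Every almost identity PC-map $\varphi:\mathrm{UT}(3,F)\to\mathrm{UT}(3,F)$ is central, i.e. $\varphi(a)\in aC$ for every $a\in\mathrm{UT}(3,F)$, where $C=\{t_{13}(\alpha):\alpha\in F\}$; equivalently $\varphi(a)_{12}=a_{12}$ and $\varphi(a)_{23}=a_{23}$ for all $a$.
   Context: $\mathrm{UT}(3,F)$ is the group of upper unitriangular $3\times3$ matrices over $F$. $e$ is the identity, $e_{ij}$ the matrix unit, $t_{ij}(\alpha)=e+\alpha e_{ij}$ ($i<j$). $[x,y]=xyx^{-1}y^{-1}$. A PC-map is a bijection $\varphi$ of the group with $\varphi([x,y])=[\varphi(x),\varphi(y)]$ for all $x,y$; it is almost identity if $\varphi(t_{ij}(\alpha))=t_{ij}(\alpha)$ for all $i<j$, $\alpha\in F$. *)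

From HB Require Import structures.
From mathcomp Require Import all_boot all_order all_algebra.
Set Implicit Arguments. Unset Strict Implicit. Unset Printing Implicit Defensive.
Import GRing.Theory.
Local Open Scope ring_scope.

Definition is_UT3 (F : fieldType) (a : 'M[F]_3) : Prop :=
  forall i j : 'I_3, ((j < i)%N -> a i j = 0) /\ (i = j -> a i j = 1).

Definition tmx (F : fieldType) (i j : 'I_3) (alpha : F) : 'M[F]_3 :=
  1%:M + alpha *: delta_mx i j.

Definition comm3 (F : fieldType) (x y : 'M[F]_3) : 'M[F]_3 :=
  x *m y *m invmx x *m invmx y.

(* phi is a PC-map of UT(3,F): a bijection of UT(3,F) preserving commutators.
   phi is given as a function on 'M[F]_3; only its restriction to UT(3,F) matters. *)
Definition PC_map (F : fieldType) (phi : 'M[F]_3 -> 'M[F]_3) : Prop :=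
  (forall a, is_UT3 a -> is_UT3 (phi a)) /\
  (forall a b, is_UT3 a -> is_UT3 b -> phi a = phi b -> a = b) /\
  (forall b, is_UT3 b -> exists2 a, is_UT3 a & phi a = b) /\
  (forall x y, is_UT3 x -> is_UT3 y -> phi (comm3 x y) = comm3 (phi x) (phi y)).

Definition almost_identity (F : fieldType) (phi : 'M[F]_3 -> 'M[F]_3) : Prop :=
  forall (i j : 'I_3) (alpha : F), (i < j)%N -> phi (tmx i j alpha) = tmx i j alpha.

From mathcomp Require Import all_boot all_order all_algebra ring.
Set Implicit Arguments. Unset Strict Implicit. Unset Printing Implicit Defensive.
Import GRing.Theory.
Local Open Scope ring_scope.

(* In coordinates [ut3 x y z] = e + x e_12 + y e_23 + z e_13, a commutator
   [a, b] equals t_13(a_12 b_23 - b_12 a_23).  Hence [a, t_23(1)] = t_13(a_12)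
   and [a, t_12(1)] = t_13(-a_23).  Since phi fixes the three t_ij, applying it
   to these identities gives t_13(a_12) = t_13(phi(a)_12) and likewise for the
   (2,3)-entry, so phi(a) and a differ by a central factor. *)

Section UT3Coordinates.

Variable F : fieldType.

Definition ut3 (x y z : F) : 'M[F]_3 :=
  \matrix_(i < 3, j < 3)
    match nat_of_ord i, nat_of_ord j with
    | 0, 0 | 1, 1 | 2, 2 => 1
    | 0, 1 => x | 1, 2 => y | 0, 2 => z
    | _, _ => 0
    end.

Ltac ut3_entrywise :=
  apply/matrixP => [[[|[|[|?]]] ?] [[|[|[|?]]] ?]];
  rewrite !mxE ?big_ord_recr ?big_ord0 /= ?mxE //=; ring.

Lemma ut3_mul (x y z x' y' z' : F) :
  ut3 x y z *m ut3 x' y' z' = ut3 (x + x') (y + y') (z + z' + x * y').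
Proof. by ut3_entrywise. Qed.

Lemma ut3_inv (x y z : F) : invmx (ut3 x y z) = ut3 (- x) (- y) (x * y - z).
Proof.
have inv_r : ut3 x y z *m ut3 (- x) (- y) (x * y - z) = 1%:M.
  by rewrite ut3_mul; ut3_entrywise.
have [unit_a _] := mulmx1_unit inv_r.
by rewrite -[RHS](mulKmx unit_a) inv_r mulmx1.
Qed.

Lemma comm3_ut3 (x y z x' y' z' : F) :
  comm3 (ut3 x y z) (ut3 x' y' z') = ut3 0 0 (x * y' - x' * y).
Proof. by rewrite /comm3 !ut3_inv !ut3_mul; congr ut3; ring. Qed.

Lemma ut3_13_inj (c c' : F) : ut3 0 0 c = ut3 0 0 c' -> c = c'.
Proof. by move/matrixP/(_ ord0 (inord 2)); rewrite !mxE inordK. Qed.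

Lemma is_UT3_ut3 (x y z : F) : is_UT3 (ut3 x y z).
Proof.
move=> [[|[|[|i]]] Hi] [[|[|[|j]]] Hj]; rewrite !mxE //=;
by split=> // /(congr1 val).
Qed.

Lemma is_UT3P (a : 'M[F]_3) : is_UT3 a -> exists x y z, a = ut3 x y z.
Proof.
move=> Ua; exists (a ord0 (inord 1)), (a (inord 1) (inord 2)), (a ord0 (inord 2)).
apply/matrixP => i j; have [lower diag] := Ua i j; rewrite !mxE.
case: i lower diag => [[|[|[|i]]] Hi]; case: j => [[|[|[|j]]] Hj] //= lower diag;
  first [ by rewrite lower | by rewrite diag //; apply: val_inj
        | by congr (a _ _); apply: val_inj; rewrite /= ?inordK ].
Qed.

Lemma tmx_ut3 (c : F) :
  [/\ tmx (inord 0) (inord 1) c = ut3 c 0 0, tmx (inord 1) (inord 2) c = ut3 0 c 0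
    & tmx (inord 0) (inord 2) c = ut3 0 0 c].
Proof.
split; apply/matrixP => [[[|[|[|i]]] Hi] [[|[|[|j]]] Hj]];
by rewrite !mxE -!val_eqE /= !inordK //=; ring.
Qed.

End UT3Coordinates.

Section AlmostIdentityPCMap.

Variables (F : fieldType) (phi : 'M[F]_3 -> 'M[F]_3).
Hypothesis phi_comm3 : forall x y, is_UT3 x -> is_UT3 y ->
  phi (comm3 x y) = comm3 (phi x) (phi y).
Hypothesis phi_tmx : almost_identity phi.

Lemma almost_identity_ut3 (x y z : F) :
  [/\ phi (ut3 x 0 0) = ut3 x 0 0, phi (ut3 0 y 0) = ut3 0 y 0
    & phi (ut3 0 0 z) = ut3 0 0 z].
Proof.
have [t12 _ _] := tmx_ut3 x; have [_ t23 _] := tmx_ut3 y.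
have [_ _ t13] := tmx_ut3 z.
by rewrite -t12 -t23 -t13 !phi_tmx ?inordK.
Qed.

Lemma almost_identity_PC_coords (x y z x' y' z' : F) :
  phi (ut3 x y z) = ut3 x' y' z' -> x' = x /\ y' = y.
Proof.
move=> phi_a.
have [phi12 phi23 _] := almost_identity_ut3 1 1 0.
have phi13 c : phi (ut3 0 0 c) = ut3 0 0 c by have [] := almost_identity_ut3 0 0 c.
have comm23 := phi_comm3 (is_UT3_ut3 x y z) (is_UT3_ut3 0 1 0).
have comm12 := phi_comm3 (is_UT3_ut3 x y z) (is_UT3_ut3 1 0 0).
rewrite phi_a phi23 !comm3_ut3 phi13 in comm23.
rewrite phi_a phi12 !comm3_ut3 phi13 in comm12.
move/ut3_13_inj: comm23; move/ut3_13_inj: comm12.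
by rewrite !mulr1 !mul1r !mulr0 !mul0r !sub0r !subr0 => /oppr_inj.
Qed.

End AlmostIdentityPCMap.

Theorem mainTheorem8 (F : fieldType) (phi : 'M[F]_3 -> 'M[F]_3) :
  PC_map phi -> almost_identity phi ->
  forall a : 'M[F]_3, is_UT3 a ->
    exists alpha : F, phi a = a *m tmx (inord 0) (inord 2) alpha.
Proof.
move=> [phi_UT3 [_ [_ phi_comm3]]] phi_tmx a Ua.
have [x' [y' [z' phi_a]]] := is_UT3P (phi_UT3 a Ua).
have [x [y [z a_coords]]] := is_UT3P Ua; rewrite a_coords in phi_a *; rewrite phi_a.
have [-> ->] := almost_identity_PC_coords phi_comm3 phi_tmx phi_a.
exists (z' - z); have [_ _ ->] := tmx_ut3 (z' - z).
by rewrite ut3_mul; congr ut3; ring.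
Qed.
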